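(* Consider the controlled SEIR system described in the context. Then: (1) For every $x_0=(S_0,E_0,I_0)\in\Pi$ and every $u\in\mathcal{U}$, the solution $x(\cdot;x_0,u)=(S,E,I)$ satisfies $\lim_{t\to\infty}E(t)=\lim_{t\to\infty}I(t)=0$ and $\lim_{t\to\infty}(S(t)+R(t))=1$, where $R(t):=1-S(t)-E(t)-I(t)$. (2) For every $x_0\in\mathcal{A}$ there exists $u\in\mathcal{U}$ such that $\lim_{t\to\infty}E(t)=\lim_{t\to\infty}I(t)=0$ and $I(t)\le I_{\max}$ for all $t\ge 0$. (3) For every $x_0\in\mathcal{M}$ and every $u\in\mathcal{U}$, $\lim_{t\to\infty}E(t)=\lim_{t\to\infty}I(t)=0$ and $I(t)\le I_{\max}$ for all $t\ge 0$.
   Context: Fix parameters $\eta>0$, $0<\beta_{\min}\le\beta_{\mathrm{nom}}$, $0<\gamma_{\mathrm{nom}}\le\gamma_{\max}<\infty$ and $I_{\max}\in(0,1)$. Let $U:=[\beta_{\min},\beta_{\mathrm{nom}}]\times[\gamma_{\mathrm{nom}},\gamma_{\max}]$ and let $\mathcal{U}$ be the set of measurable, locally integrable functions $u=(\beta,\gamma):[0,\infty)\to U$. Let $\Pi:=\{(S,E,I)\in[0,1]^3: S+E+I\le 1\}$. For $x_0=(S_0,E_0,I_0)\in\Pi$ and $u\in\mathcal{U}$, $x(\cdot;x_0,u)=(S,E,I)$ denotes the unique (absolutely continuous) solution of $\dot S=-\beta(t)SI$, $\dot E=\beta(t)SI-\eta E$, $\dot I=\eta E-\gamma(t)I$ with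 $x(0)=x_0$; it stays in $\Pi$. The removed compartment is $R(t)=1-S(t)-E(t)-I(t)$, which satisfies $\dot R=\gamma(t)I$. Let $G_\Pi:=\{(S,E,I)\in\Pi: I\le I_{\max}\}$. The admissible set is $\mathcal{A}:=\{x_0\in G_\Pi:\exists u\in\mathcal{U}\text{ with } x(t;x_0,u)\in G_\Pi\ \forall t\ge 0\}$, and the maximal robust positively invariant set is $\mathcal{M}:=\{x_0\in G_\Pi: x(t;x_0,u)\in G_\Pi\ \forall t\ge0,\ \forall u\in\mathcal{U}\}$. *)

From HB Require Import structures.
From mathcomp Require Import all_boot all_order all_algebra.
From mathcomp Require Import all_classical all_reals all_analysis.
Set Implicit Arguments. Unset Strict Implicit. Unset Printing Implicit Defensive.
Import Order.TTheory GRing.Theory Num.Theory.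
Import numFieldNormedType.Exports.
Local Open Scope classical_set_scope.
Local Open Scope ring_scope.

Section SEIR.
Variable R : realType.
Local Notation mu := (@lebesgue_measure R).

Definition inPi (S E I : R) : Prop :=
  [/\ 0 <= S <= 1, 0 <= E <= 1, 0 <= I <= 1 & S + E + I <= 1].

Definition inGPi (Imax S E I : R) : Prop := inPi S E I /\ I <= Imax.

Definition admissible_control (bmin bnom gnom gmax : R) (beta gamma : R -> R)
  : Prop :=
  [/\ measurable_fun (`[0%R, +oo[ : set R) beta,
      measurable_fun (`[0%R, +oo[ : set R) gamma,
      (forall T, 0 <= T ->
         mu.-integrable (`[0%R, T] : set R) (EFin \o beta) /\
         mu.-integrable (`[0%R, T] : set R) (EFin \o gamma)) &
      (forall t, 0 <= t -> bmin <= beta t <= bnom /\ gnom <= gamma t <= gmax)].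

(* (S,E,I) is an absolutely continuous (Caratheodory) solution on [0,+oo)
   of the controlled SEIR system with initial state (S0,E0,I0), written
   in the equivalent integral form: the right-hand sides are integrable on
   every [0,t] and each state equals its initial value plus the integral
   of its right-hand side. *)
Definition seir_solution (eta : R) (beta gamma : R -> R) (S0 E0 I0 : R)
  (S E I : R -> R) : Prop :=
  forall t, 0 <= t ->
    let fS := fun s => - (beta s * S s * I s) in
    let fE := fun s => beta s * S s * I s - eta * E s in
    let fI := fun s => eta * E s - gamma s * I s in
    [/\ mu.-integrable (`[0%R, t] : set R) (EFin \o fS),
        mu.-integrable (`[0%R, t] : set R) (EFin \o fE) &
        mu.-integrable (`[0%R, t] : set R) (EFin \o fI)] /\
    [/\ S t = S0 + Rintegral mu (`[0%R, t] : set R) fS,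
        E t = E0 + Rintegral mu (`[0%R, t] : set R) fE &
        I t = I0 + Rintegral mu (`[0%R, t] : set R) fI].

Definition in_A (eta bmin bnom gnom gmax Imax : R) (S0 E0 I0 : R) : Prop :=
  inGPi Imax S0 E0 I0 /\
  exists beta gamma, admissible_control bmin bnom gnom gmax beta gamma /\
    forall S E I, seir_solution eta beta gamma S0 E0 I0 S E I ->
      forall t, 0 <= t -> inGPi Imax (S t) (E t) (I t).

Definition in_M (eta bmin bnom gnom gmax Imax : R) (S0 E0 I0 : R) : Prop :=
  inGPi Imax S0 E0 I0 /\
  forall beta gamma, admissible_control bmin bnom gnom gmax beta gamma ->
    forall S E I, seir_solution eta beta gamma S0 E0 I0 S E I ->
      forall t, 0 <= t -> inGPi Imax (S t) (E t) (I t).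

End SEIR.

From HB Require Import structures.
From mathcomp Require Import all_boot all_order all_algebra.
From mathcomp Require Import all_classical all_reals all_analysis.
From mathcomp Require Import ring lra.
Import Order.TTheory GRing.Theory Num.Theory.
Import numFieldNormedType.Exports.
Local Open Scope classical_set_scope.
Local Open Scope ring_scope.

(* Write N = S + E + I. Along a solution N' = -gamma I <= -gnom I and
   (S + E)' = -eta E, so N and S + E are nonincreasing and dissipate at rates
   proportional to I and E. On the invariant simplex E and I are Lipschitz, so a
   Barbalat-type argument turns this dissipation into E, I -> 0, whence
   S + R = 1 - E - I -> 1; parts (2) and (3) only add the bound I <= Imax built into
   the sets A and M.
   Invariance of the simplex rests on quasi-positivity: whenever a component is
   negative, its rate is bounded below by a constant times the negative parts of the
   state, so on short time windows the deepest negative excursion m satisfies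
   m <= m/2 and therefore vanishes. *)

Set Implicit Arguments. Unset Strict Implicit.

Section IntegralEquation.
Variable R : realType.
Local Notation mu := (@lebesgue_measure R).
Implicit Types (F g : R -> R) (s t c C : R).

Lemma lebesgue_measure_itv_oc s t : s <= t -> fine (mu `]s, t]) = t - s.
Proof.
rewrite le_eqVlt => /predU1P[->|st]; first by rewrite set_itv_ge ?bnd_simp// measure0 subrr.
by rewrite lebesgue_measure_itv /= lte_fin st.
Qed.

Lemma integrable_itv_oc_cst s t c : mu.-integrable `]s, t] (EFin \o cst c).
Proof.
apply: (@integrableS _ _ _ mu `[s, t]) => //; first exact: subset_itv_oc_cc.
apply: continuous_compact_integrable; first exact: segment_compact.
exact/continuous_subspaceT/cst_continuous.
Qed.

Lemma Rintegral_itv_oc_ge s t c g : s <= t ->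
  mu.-integrable `]s, t] (EFin \o g) ->
  (forall u, s < u <= t -> c <= g u) -> c * (t - s) <= Rintegral mu `]s, t] g.
Proof.
move=> st ig cg; rewrite -lebesgue_measure_itv_oc// -Rintegral_cst//.
by apply: le_Rintegral => //; exact: integrable_itv_oc_cst.
Qed.

Lemma Rintegral_itv_oc_le s t c g : s <= t ->
  mu.-integrable `]s, t] (EFin \o g) ->
  (forall u, s < u <= t -> g u <= c) -> Rintegral mu `]s, t] g <= c * (t - s).
Proof.
move=> st ig gc; rewrite -lebesgue_measure_itv_oc// -Rintegral_cst//.
by apply: le_Rintegral => //; exact: integrable_itv_oc_cst.
Qed.

Definition integral_eq F (F0 : R) g : Prop := forall t, 0 <= t ->
  mu.-integrable `[0, t] (EFin \o g) /\ F t = F0 + Rintegral mu `[0, t] g.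

Lemma integral_eqD F G (F0 G0 : R) f g :
  integral_eq F F0 f -> integral_eq G G0 g ->
  integral_eq (fun t => F t + G t) (F0 + G0) (fun t => f t + g t).
Proof.
move=> solF solG t t0; have [iF ->] := solF t t0; have [iG ->] := solG t t0.
by split; [exact: (integrableD _ iF iG) | rewrite RintegralD // addrACA].
Qed.

Section IntegralEqTheory.
Variables (F g : R -> R) (F0 : R).
Hypothesis solF : integral_eq F F0 g.

Lemma integral_eq0 : F 0 = F0.
Proof. by have [_ ->] := solF (lexx 0); rewrite set_itv1 Rintegral_set1 addr0. Qed.

Lemma integral_eqB s t : 0 <= s -> s <= t ->
  mu.-integrable `]s, t] (EFin \o g) /\ F t - F s = Rintegral mu `]s, t] g.
Proof.
move=> s0 st; have [igt Ft] := solF (le_trans s0 st); have [_ Fs] := solF s0.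
split; first by apply: integrableS igt => //; apply: subset_itvr; rewrite bnd_simp.
rewrite Ft Fs opprD addrACA subrr add0r.
by have := @Rintegral_itvB R g (BLeft 0) (BRight t) s igt; rewrite !bnd_simp => ->.
Qed.

Lemma integral_eq_lipschitz C s t : 0 <= s -> s <= t ->
  (forall u, s < u <= t -> `|g u| <= C) -> `|F t - F s| <= C * (t - s).
Proof.
move=> s0 st gC; have [ig ->] := integral_eqB s0 st.
rewrite ler_norml -mulNr Rintegral_itv_oc_ge ?Rintegral_itv_oc_le// => u /gC;
  by rewrite ler_norml => /andP[].
Qed.

Lemma integral_eq_decrease c s t : 0 <= s -> s <= t ->
  (forall u, s < u <= t -> g u <= - c) -> c * (t - s) <= F s - F t.
Proof.
move=> s0 st gc; have [ig Fts] := integral_eqB s0 st.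
by rewrite -[F s - F t]opprB Fts lerNr -mulNr Rintegral_itv_oc_le.
Qed.

Lemma integral_eq_bounded T : exists B, forall u, 0 <= u <= T -> `|F u| <= B.
Proof.
exists (`|F0| + Rintegral mu `[0, T] (fun x => `|g x|)) => u /andP[u0 uT].
have [iu ->] := solF u0; have [iT _] := solF (le_trans u0 uT).
rewrite (le_trans (ler_normD _ _))// lerD2l.
apply: (le_trans (le_normr_Rintegral _ _)) => //.
have := @Rintegral_itvB R (fun x => `|g x|) (BLeft 0) (BRight T) u (integrable_norm iT).
rewrite !bnd_simp => /(_ u0 uT) eqB.
by rewrite -subr_ge0 eqB; apply: Rintegral_ge0.
Qed.

Lemma integral_eq_sup_ge0 (A : set R) (C a t : R) : 0 <= a ->
  (forall u, a < u <= t -> `|g u| <= C) -> A !=set0 ->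
  (forall u, A u -> a <= u <= t /\ 0 <= F u) -> 0 <= F (sup A).
Proof.
move=> a0 gC [u0 Au0] AF.
have hsA : has_sup A by split; [exists u0 | exists t => u /AF[/andP[]]].
have st : sup A <= t by apply: ge_sup; [exists u0 | move=> u /AF[/andP[]]].
apply/ler_addgt0Pr => e e0.
have e1 : 0 < e / (`|C| + 1) by rewrite divr_gt0 // ltr_wpDl.
have [u Au su] := sup_adherent e1 hsA; have [/andP[au ut] Fu0] := AF u Au.
have us : u <= sup A by exact: sup_upper_bound.
have gCus v : u < v <= sup A -> `|g v| <= `|C|.
  case/andP=> uv vs; apply: le_trans (ler_norm C).
  by apply: gC; rewrite (le_lt_trans au uv) (le_trans vs st).
have := integral_eq_lipschitz (le_trans a0 au) us gCus.
rewrite ler_norml => /andP[+ _].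
have : (`|C| + 1) * (sup A - u) <= e by rewrite mulrC -ler_pdivlMr ?ltr_wpDl //; lra.
have := normr_ge0 C; nra.
Qed.

(* After the last time s in [a, t] with F s >= 0, F is negative and hence decreases at
   rate at most c. *)
Lemma integral_eq_ge_excursion (C c a t : R) : 0 <= a -> a <= t -> 0 <= c ->
  (forall u, a < u <= t -> `|g u| <= C) -> 0 <= F a ->
  (forall u, a < u <= t -> F u < 0 -> - c <= g u) -> - c * (t - a) <= F t.
Proof.
move=> a0 at0 c0 gC Fa0 gc.
pose A := [set u | a <= u <= t /\ 0 <= F u].
have Aa : A a by rewrite /A /= lexx at0.
have hsA : has_sup A by split; [exists a | exists t => u [/andP[]]].
have as0 : a <= sup A by exact: sup_upper_bound.
have st : sup A <= t by apply: ge_sup; [exists a | move=> u [/andP[]]].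
have Fs0 : 0 <= F (sup A) by apply: (integral_eq_sup_ge0 a0 gC); first exists a.
have Fneg u : sup A < u <= t -> F u < 0.
  case/andP=> su ut; rewrite ltNge; apply/negP => Fu0.
  have : u <= sup A by apply: sup_upper_bound => //; rewrite /A /= ut (le_trans as0 (ltW su)).
  by rewrite leNgt su.
have [ig Fts] := integral_eqB (le_trans a0 as0) st.
have : - c * (t - sup A) <= F t - F (sup A).
  rewrite Fts; apply: Rintegral_itv_oc_ge => // u sut; apply: gc (Fneg u sut).
  by case/andP: sut => su ->; rewrite (le_lt_trans as0 su).
nra.
Qed.

End IntegralEqTheory.

Section QuasiPositiveSystem.
Variables (ι : Type) (F g : ι -> R -> R) (F0 : ι -> R) (T C K : R).
Hypothesis solF : forall i, integral_eq (F i) (F0 i) (g i).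
Hypothesis F0_ge0 : forall i, 0 <= F0 i.
Hypothesis g_bounded : forall i u, 0 <= u <= T -> `|g i u| <= C.
Hypothesis K_ge0 : 0 <= K.
Hypothesis g_quasipositive : forall i u m, 0 <= u <= T -> 0 <= m ->
  (forall j, - m <= F j u) -> F i u < 0 -> - (K * m) <= g i u.

Let dl := (2 * (K + 1))^-1.

Let dl_gt0 : 0 < dl.
Proof. by rewrite invr_gt0 mulr_gt0// ltr_wpDl. Qed.

Let F_ge_upto i v : 0 <= v <= T -> - (`|C| * T) <= F i v.
Proof.
case/andP=> v0 vT.
have gCv u : 0 < u <= v -> `|g i u| <= C.
  by case/andP=> u0 uv; apply: g_bounded; rewrite ltW //= (le_trans uv vT).
have := integral_eq_lipschitz (solF i) (lexx 0) v0 gCv.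
rewrite (integral_eq0 (solF i)) ler_norml => /andP[+ _].
have := F0_ge0 i; have : C * v <= `|C| * T.
  by rewrite (le_trans (ler_wpM2r v0 (ler_norm C))) // ler_wpM2l.
lra.
Qed.

(* With m the deepest negative excursion of the family on [a, b], every component stays
   above -(K m)(b - a) >= -m/2 there, so m <= m/2 and m = 0. *)
Let ge0_step a b : 0 <= a -> a <= b -> b <= T -> b - a <= dl ->
  (forall i, 0 <= F i a) -> forall i v, a <= v <= b -> 0 <= F i v.
Proof.
move=> a0 ab bT bdl Fa0.
pose V := [set x | x = 0 \/ exists i v, a <= v <= b /\ x = - F i v].
have hsV : has_sup V.
  split; first by exists 0; left.
  exists (`|C| * T) => x [->|[i [v [/andP[av vb] ->]]]].
    by rewrite mulr_ge0 // (le_trans a0 (le_trans ab bT)).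
  by rewrite lerNl; apply: F_ge_upto; rewrite (le_trans a0 av) (le_trans vb bT).
pose m := sup V.
have m0 : 0 <= m by apply: sup_upper_bound => //; left.
have negF_le i v : a <= v <= b -> - F i v <= m.
  by move=> abv; apply: sup_upper_bound => //; right; exists i, v.
have F_ge i v : a <= v <= b -> - (m / 2) <= F i v.
  case/andP=> av vb.
  have uT u : a < u <= v -> 0 <= u <= T.
    by case/andP=> au uv; rewrite (le_trans a0 (ltW au)) (le_trans uv (le_trans vb bT)).
  have gCi u (auv : a < u <= v) : `|g i u| <= C := g_bounded i (uT u auv).
  have gKi u : a < u <= v -> F i u < 0 -> - (K * m) <= g i u.
    move=> auv; apply: g_quasipositive (uT u auv) m0 _ => j.
    by case/andP: auv => au uv; rewrite lerNl negF_le // (ltW au) (le_trans uv vb).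
  have Km0 : 0 <= K * m by rewrite mulr_ge0.
  have := integral_eq_ge_excursion (solF i) a0 av Km0 gCi (Fa0 i) gKi.
  have dlE : (K + 1) * dl = 2^-1.
    by rewrite /dl invfM mulrCA mulfV ?mulr1 // lt0r_neq0 // ltr_wpDl.
  have : 0 <= m * dl by rewrite mulr_ge0 // ltW.
  nra.
have mle : m <= m / 2.
  apply: ge_sup; first by exists 0; left.
  move=> x [->|[i [v [abv ->]]]]; first by rewrite divr_ge0.
  by rewrite lerNl; apply: F_ge.
move=> i v abv; have := F_ge i v abv; lra.
Qed.

Lemma integral_eq_system_ge0 i t : 0 <= t <= T -> 0 <= F i t.
Proof.
have ge0_upto n j v : 0 <= v <= T -> v <= n%:R * dl -> 0 <= F j v.
  elim: n j v => [|n IHn] j v /andP[v0 vT] vn.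
    have -> : v = 0 by move: vn; rewrite mul0r; lra.
    by rewrite (integral_eq0 (solF j)).
  have [|vgt] := leP v (n%:R * dl); first by apply: IHn; rewrite v0 vT.
  have a0 : 0 <= n%:R * dl by rewrite mulr_ge0 // ltW.
  have aT : n%:R * dl <= T := le_trans (ltW vgt) vT.
  apply: (ge0_step a0 (ltW vgt) vT) => [|k|]; last by rewrite (ltW vgt) lexx.
    by move: vn; rewrite -natr1 mulrDl mul1r; lra.
  by apply: IHn; rewrite ?a0 ?aT.
case/andP=> t0 tT; apply: (ge0_upto (Num.bound (T / dl))); first by rewrite t0.
have T0 : 0 <= T / dl by rewrite divr_ge0 ?(le_trans t0 tT) // ltW.
rewrite -ler_pdivrMr //; apply: le_trans (ltW (archi_boundP T0)).
by rewrite ler_wpM2r // invr_ge0 ltW.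
Qed.

End QuasiPositiveSystem.

End IntegralEquation.

(* If f t >= e, the Lipschitz bound keeps f >= e/2 on [t, t + e/(2L)], which costs V a
   fixed amount; as V is nonincreasing and bounded below, this cannot happen once V is
   close to its infimum. *)
Lemma dissipation_cvg0 (R : realType) (f V : R -> R) (L k : R) : 0 < L -> 0 < k ->
  (forall t, 0 <= t -> 0 <= V t) -> (forall t, 0 <= t -> 0 <= f t) ->
  (forall s t, 0 <= s -> s <= t -> `|f t - f s| <= L * (t - s)) ->
  (forall s t m, 0 <= s -> s <= t -> 0 <= m ->
     (forall u, s < u <= t -> m <= f u) -> k * m * (t - s) <= V s - V t) ->
  f t @[t --> +oo] --> 0.
Proof.
move=> L0 k0 V0 f0 f_lip V_dissip.
have V_nonincr s t : 0 <= s -> s <= t -> V t <= V s.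
  move=> s0 st; have := V_dissip s t 0 s0 st (lexx 0).
  have f0' u : s < u <= t -> 0 <= f u by case/andP=> su _; apply/f0/(le_trans s0 (ltW su)).
  by move=> /(_ f0'); rewrite mulr0 mul0r subr_ge0.
pose Vs := V @` `[0, +oo[.
have hiV : has_inf Vs.
  split; first by exists (V 0), 0 => //=; rewrite in_itv /= lexx.
  by exists 0 => _ [t /= t0 <-]; apply: V0; move: t0; rewrite in_itv /= andbT.
suff near_lt e : 0 < e -> \forall t \near +oo, `|0 - f t| < e by apply/cvgrPdist_lt.
move=> e0; pose h := e / (2 * L).
have h0 : 0 < h by rewrite divr_gt0 // mulr_gt0.
have Lh : L * h = e / 2 by rewrite /h; field; exact: lt0r_neq0.
have e2 : 0 < e / 2 by rewrite divr_gt0.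
have D0 : 0 < k * (e / 2) * h := mulr_gt0 (mulr_gt0 k0 e2) h0.
have [_ [T0 /= T00 <-] VT0] := inf_adherent D0 hiV.
rewrite in_itv /= andbT in T00.
exists T0; split; first exact: num_real.
move=> t Tt; have t0 := le_trans T00 (ltW Tt).
rewrite sub0r normrN ger0_norm ?f0 // ltNge; apply/negP => fte.
have th : t <= t + h by rewrite lerDl ltW.
have f_ge u : t < u <= t + h -> e / 2 <= f u.
  case/andP=> tu uth; have := f_lip t u t0 (ltW tu); rewrite ler_norml => /andP[+ _].
  have : L * (u - t) <= L * h by apply: ler_wpM2l; [exact: ltW | lra].
  lra.
have := V_dissip t (t + h) (e / 2) t0 th (ltW e2) f_ge.
have := V_nonincr T0 t T00 (ltW Tt).
have : inf Vs <= V (t + h).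
  by apply: ge_inf; [case: hiV | exists (t + h); rewrite //= in_itv /= andbT (le_trans t0 th)].
have -> : t + h - t = h by ring.
lra.
Qed.

Lemma mul_lower_bound (R : realDomainType) (x y m B : R) :
  0 <= m -> - m <= x -> - m <= y -> `|x| <= B -> `|y| <= B -> - (m * B) <= x * y.
Proof.
move=> m0 mx my xB yB; have B0 := le_trans (normr_ge0 x) xB.
move: xB yB; rewrite !ler_norml => /andP[xB1 xB2] /andP[yB1 yB2].
by have [x0|x0] := leP 0 x; have [y0|y0] := leP 0 y; nra.
Qed.

Variant compartment := Susceptible | Exposed | Infectious.

Section SEIR.
Variables (R : realType) (eta bnom gnom gmax : R) (beta gamma : R -> R).
Variables (S0 E0 I0 : R) (S E I : R -> R).
Hypotheses (eta_gt0 : 0 < eta) (gnom_gt0 : 0 < gnom).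
Hypothesis beta_bound : forall t, 0 <= t -> 0 <= beta t <= bnom.
Hypothesis gamma_bound : forall t, 0 <= t -> gnom <= gamma t <= gmax.
Hypothesis x0_Pi : inPi S0 E0 I0.
Hypothesis sol : seir_solution eta beta gamma S0 E0 I0 S E I.
Local Notation mu := (@lebesgue_measure R).

Let fS s := - (beta s * S s * I s).
Let fE s := beta s * S s * I s - eta * E s.
Let fI s := eta * E s - gamma s * I s.

Let solS : integral_eq S S0 fS. Proof. by move=> t /sol[[? _ _] [? _ _]]. Qed.
Let solE : integral_eq E E0 fE. Proof. by move=> t /sol[[_ ? _] [_ ? _]]. Qed.
Let solI : integral_eq I I0 fI. Proof. by move=> t /sol[[_ _ ?] [_ _ ?]]. Qed.

Let bnom_ge0 : 0 <= bnom.
Proof. by have /andP[b0 bb] := beta_bound (lexx 0); exact: le_trans b0 bb. Qed.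

Let gamma_ge0 t : 0 <= t -> 0 <= gamma t.
Proof. by move=> /gamma_bound/andP[g0 _]; exact: le_trans (ltW gnom_gt0) g0. Qed.

Let gmax_gt0 : 0 < gmax.
Proof.
by have /andP[g0 gg] := gamma_bound (lexx 0); exact: lt_le_trans gnom_gt0 (le_trans g0 gg).
Qed.

Section Horizon.
Variables (T B : R).
Hypothesis T_ge0 : 0 <= T.
Hypothesis state_bound : forall u : R, 0 <= u <= T ->
  [/\ `|S u| <= B, `|E u| <= B & `|I u| <= B].

Let B_ge0 : 0 <= B.
Proof.
have /state_bound[SB _ _] : (0 : R) <= 0 <= T by rewrite lexx T_ge0.
exact: le_trans (normr_ge0 _) SB.
Qed.

Let C := bnom * B * B + (eta + gmax) * B.

Let rates_bound (u : R) : 0 <= u <= T -> [/\ `|fS u| <= C, `|fE u| <= C & `|fI u| <= C].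
Proof.
move=> /[dup] /andP[u0 _] /state_bound[SB EB IB].
have /andP[b0 bb] := beta_bound u0; have /andP[_ gm] := gamma_bound u0.
have bSI : `|beta u * S u * I u| <= bnom * B * B.
  by rewrite !normrM ger0_norm // !ler_pM // mulr_ge0.
have eE : `|eta * E u| <= eta * B by rewrite normrM gtr0_norm // ler_wpM2l // ltW.
have gI : `|gamma u * I u| <= gmax * B.
  by rewrite normrM ger0_norm ?ler_pM ?gamma_ge0.
have eB : 0 <= eta * B by rewrite mulr_ge0 // ltW.
have gB : 0 <= gmax * B by rewrite mulr_ge0 // ltW.
have bB : 0 <= bnom * B * B by rewrite !mulr_ge0.
rewrite /C /fS /fE /fI normrN; split.
- lra.
- by apply: le_trans (ler_normB _ _) _; lra.
- by apply: le_trans (ler_normB _ _) _; lra.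
Qed.

Let K := bnom * B + eta.

Let rates_quasipositive (u m : R) : 0 <= u <= T -> 0 <= m ->
    - m <= S u -> - m <= E u -> - m <= I u ->
  [/\ S u < 0 -> - (K * m) <= fS u, E u < 0 -> - (K * m) <= fE u
    & I u < 0 -> - (K * m) <= fI u].
Proof.
move=> /[dup] /andP[u0 _] /state_bound[SB EB IB] m0 mS mE mI.
have /andP[b0 bb] := beta_bound u0.
have mB : 0 <= m * B by rewrite mulr_ge0.
have em : 0 <= eta * m by rewrite mulr_ge0 // ltW.
have bBm : 0 <= bnom * B * m by rewrite !mulr_ge0.
have eE : - (eta * m) <= eta * E u by rewrite -mulrN ler_wpM2l // ltW.
have bSI : - (bnom * (m * B)) <= beta u * (S u * I u).
  have SI : - (m * B) <= S u * I u := mul_lower_bound m0 mS mI SB IB.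
  nra.
rewrite /K /fS /fE /fI; split => neg.
- have : - (m * B) <= - S u * I u.
    by apply: mul_lower_bound => //; [lra | rewrite normrN].
  nra.
- nra.
- have : 0 <= gamma u * - I u.
    by apply: mulr_ge0; [exact: gamma_ge0 | lra].
  nra.
Qed.

Lemma seir_ge0_upto t : 0 <= t <= T -> [/\ 0 <= S t, 0 <= E t & 0 <= I t].
Proof.
pose F c := match c with Susceptible => S | Exposed => E | Infectious => I end.
pose F0 c := match c with Susceptible => S0 | Exposed => E0 | Infectious => I0 end.
pose g c := match c with Susceptible => fS | Exposed => fE | Infectious => fI end.
have solF c : integral_eq (F c) (F0 c) (g c) by case: c.
have F0_ge0 c : 0 <= F0 c.
  by case: x0_Pi => /andP[? _] /andP[? _] /andP[? _] _; case: c.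
have g_bounded c (u : R) : 0 <= u <= T -> `|g c u| <= C.
  by move=> /rates_bound[? ? ?]; case: c.
have K_ge0 : 0 <= K by rewrite addr_ge0 ?mulr_ge0 // ltW.
have g_qp c (u m : R) : 0 <= u <= T -> 0 <= m ->
    (forall c', - m <= F c' u) -> F c u < 0 -> - (K * m) <= g c u.
  move=> uT m0 mF.
  have [? ? ?] := rates_quasipositive uT m0 (mF Susceptible) (mF Exposed) (mF Infectious).
  by case: c.
move=> tT; have ge0 c := integral_eq_system_ge0 solF F0_ge0 g_bounded K_ge0 g_qp c tT.
by split; [exact: (ge0 Susceptible) | exact: (ge0 Exposed) | exact: (ge0 Infectious)].
Qed.

End Horizon.

Lemma seir_ge0 t : 0 <= t -> [/\ 0 <= S t, 0 <= E t & 0 <= I t].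
Proof.
move=> t0.
have [BS hS] := integral_eq_bounded solS t; have [BE hE] := integral_eq_bounded solE t.
have [BI hI] := integral_eq_bounded solI t.
apply: (@seir_ge0_upto t (`|BS| + `|BE| + `|BI|)); rewrite ?t0 ?lexx // => u ut.
have := ler_norm BS; have := ler_norm BE; have := ler_norm BI.
have := normr_ge0 BS; have := normr_ge0 BE; have := normr_ge0 BI.
have := hS u ut; have := hE u ut; have := hI u ut.
by split; lra.
Qed.

Lemma seir_total_decrease s t m : 0 <= s -> s <= t -> 0 <= m ->
    (forall u, s < u <= t -> m <= I u) ->
  gnom * m * (t - s) <= (S s + E s + I s) - (S t + E t + I t).
Proof.
move=> s0 st m0 mI.
apply: (integral_eq_decrease (integral_eqD (integral_eqD solS solE) solI)) => //.
move=> u /[dup] /andP[su _] /mI mIu; have u0 := le_trans s0 (ltW su).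
have /andP[gg _] := gamma_bound u0.
have : gnom * m <= gamma u * I u by rewrite ler_pM // ltW.
rewrite /fS /fE /fI /=; lra.
Qed.

Lemma seir_SE_decrease s t m : 0 <= s -> s <= t -> 0 <= m ->
    (forall u, s < u <= t -> m <= E u) ->
  eta * m * (t - s) <= (S s + E s) - (S t + E t).
Proof.
move=> s0 st m0 mE.
apply: (integral_eq_decrease (integral_eqD solS solE)) => // u /mE mEu.
have : eta * m <= eta * E u by rewrite ler_wpM2l // ltW.
rewrite /fS /fE /=; lra.
Qed.

Lemma seir_inPi t : 0 <= t -> inPi (S t) (E t) (I t).
Proof.
move=> t0; have [St_ge0 Et_ge0 It_ge0] := seir_ge0 t0.
have I_ge0 u : 0 < u <= t -> 0 <= I u by case/andP=> /ltW /seir_ge0[].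
have := seir_total_decrease (lexx 0) t0 (lexx 0) I_ge0.
rewrite (integral_eq0 solS) (integral_eq0 solE) (integral_eq0 solI) mulr0 mul0r.
case: x0_Pi => _ _ _ N0; rewrite /inPi St_ge0 Et_ge0 It_ge0 /=.
by split; lra.
Qed.

Lemma seir_E_lipschitz s t : 0 <= s -> s <= t ->
  `|E t - E s| <= (bnom + eta) * (t - s).
Proof.
move=> s0 st; apply: (integral_eq_lipschitz solE) => // u /andP[su _].
have u0 := le_trans s0 (ltW su); have /andP[b0 bb] := beta_bound u0.
have [/andP[Su0 Su1] /andP[Eu0 Eu1] /andP[Iu0 Iu1] _] := seir_inPi u0.
have : 0 <= beta u * S u * I u <= bnom * 1 * 1 by rewrite !mulr_ge0 //= !ler_pM // mulr_ge0.
have : 0 <= eta * E u <= eta * 1 by rewrite mulr_ge0 ?ler_wpM2l // ltW.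
rewrite /fE !mulr1 ler_norml => /andP[? ?] /andP[? ?]; lra.
Qed.

Lemma seir_I_lipschitz s t : 0 <= s -> s <= t ->
  `|I t - I s| <= (eta + gmax) * (t - s).
Proof.
move=> s0 st; apply: (integral_eq_lipschitz solI) => // u /andP[su _].
have u0 := le_trans s0 (ltW su); have /andP[_ gg] := gamma_bound u0.
have [_ /andP[Eu0 Eu1] /andP[Iu0 Iu1] _] := seir_inPi u0.
have g0' := gamma_ge0 u0.
have : 0 <= gamma u * I u <= gmax * 1 by rewrite mulr_ge0 //= ler_pM.
have : 0 <= eta * E u <= eta * 1 by rewrite mulr_ge0 ?ler_wpM2l // ltW.
rewrite /fI !mulr1 ler_norml => /andP[? ?] /andP[? ?]; lra.
Qed.

Lemma seir_E_cvg0 : E t @[t --> +oo] --> 0.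
Proof.
apply: (@dissipation_cvg0 _ E (fun t => S t + E t) (bnom + eta) eta).
- by rewrite ltr_wpDl.
- exact: eta_gt0.
- by move=> t /seir_ge0[? ? _]; rewrite addr_ge0.
- by move=> t /seir_ge0[].
- exact: seir_E_lipschitz.
- exact: seir_SE_decrease.
Qed.

Lemma seir_I_cvg0 : I t @[t --> +oo] --> 0.
Proof.
apply: (@dissipation_cvg0 _ I (fun t => S t + E t + I t) (eta + gmax) gnom).
- by rewrite ltr_wpDr // ltW.
- exact: gnom_gt0.
- by move=> t /seir_ge0[? ? ?]; rewrite !addr_ge0.
- by move=> t /seir_ge0[].
- exact: seir_I_lipschitz.
- exact: seir_total_decrease.
Qed.

Lemma seir_limits : [/\ E t @[t --> +oo] --> (0 : R), I t @[t --> +oo] --> (0 : R)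
  & S t + (1 - S t - E t - I t) @[t --> +oo] --> (1 : R)].
Proof.
split; [exact: seir_E_cvg0 | exact: seir_I_cvg0 |].
have -> : (fun t => S t + (1 - S t - E t - I t)) = (fun t => 1 - E t - I t).
  by apply: funext => t; ring.
rewrite -[X in _ --> X]subr0 -[X in _ --> X - _]subr0.
exact: cvgB (cvgB (cvg_cst _) seir_E_cvg0) seir_I_cvg0.
Qed.

End SEIR.

Lemma admissible_seir_limits (R : realType) (eta bmin bnom gnom gmax : R)
    (beta gamma : R -> R) (S0 E0 I0 : R) (S E I : R -> R) :
  0 < eta -> 0 < bmin -> 0 < gnom -> inPi S0 E0 I0 ->
  admissible_control bmin bnom gnom gmax beta gamma ->
  seir_solution eta beta gamma S0 E0 I0 S E I ->
  [/\ E t @[t --> +oo] --> (0 : R), I t @[t --> +oo] --> (0 : R)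
    & S t + (1 - S t - E t - I t) @[t --> +oo] --> (1 : R)].
Proof.
move=> eta0 bmin0 gnom0 x0 [_ _ _ ctrl] sol.
apply: (seir_limits (bnom := bnom) (gmax := gmax) eta0 gnom0 _ _ x0 sol) => t /ctrl[//].
by case/andP=> b1 b2 _; apply/andP; split; first exact: le_trans (ltW bmin0) b1.
Qed.

Theorem lemma1 (R : realType) (eta bmin bnom gnom gmax Imax : R) :
  0 < eta -> 0 < bmin -> bmin <= bnom -> 0 < gnom -> gnom <= gmax ->
  0 < Imax -> Imax < 1 ->
  (* (1) *)
  (forall S0 E0 I0 : R, inPi S0 E0 I0 ->
   forall beta gamma : R -> R, admissible_control bmin bnom gnom gmax beta gamma ->
   forall S E I : R -> R, seir_solution eta beta gamma S0 E0 I0 S E I ->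
     [/\ E t @[t --> +oo] --> (0 : R),
         I t @[t --> +oo] --> (0 : R) &
         S t + (1 - S t - E t - I t) @[t --> +oo] --> (1 : R)]) /\
  (* (2) *)
  (forall S0 E0 I0 : R, in_A eta bmin bnom gnom gmax Imax S0 E0 I0 ->
   exists beta gamma : R -> R, admissible_control bmin bnom gnom gmax beta gamma /\
   forall S E I : R -> R, seir_solution eta beta gamma S0 E0 I0 S E I ->
     [/\ E t @[t --> +oo] --> (0 : R),
         I t @[t --> +oo] --> (0 : R) &
         forall t, 0 <= t -> I t <= Imax]) /\
  (* (3) *)
  (forall S0 E0 I0 : R, in_M eta bmin bnom gnom gmax Imax S0 E0 I0 ->
   forall beta gamma : R -> R, admissible_control bmin bnom gnom gmax beta gamma ->
   forall S E I : R -> R, seir_solution eta beta gamma S0 E0 I0 S E I ->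
     [/\ E t @[t --> +oo] --> (0 : R),
         I t @[t --> +oo] --> (0 : R) &
         forall t, 0 <= t -> I t <= Imax]).
Proof.
move=> eta0 bmin0 _ gnom0 _ _ _.
split=> [S0 E0 I0 x0 beta gamma ctrl S E I sol|].
  exact: admissible_seir_limits eta0 bmin0 gnom0 x0 ctrl sol.
split=> [S0 E0 I0 [[x0 _] [beta [gamma [ctrl inv]]]]|S0 E0 I0 [[x0 _] inv] beta gamma ctrl].
- exists beta, gamma; split=> // S E I sol.
  have [? ? _] := admissible_seir_limits eta0 bmin0 gnom0 x0 ctrl sol.
  by split=> // t /(inv S E I sol)[].
- move=> S E I sol; have [? ? _] := admissible_seir_limits eta0 bmin0 gnom0 x0 ctrl sol.
  by split=> // t /(inv beta gamma ctrl S E I sol)[].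
Qed.
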